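(* Let $P$ be a poset and let $\overline{down(P)}$ denote the topological closure of $down(P)=\{\downarrow x: x\in P\}$ in $\mathfrak{P}(P)$. Then $down(P)\subseteq \mathcal{J}(P)\subseteq \overline{down(P)}\setminus\{\emptyset\}$. In particular, $down(P)$ and $\mathcal{J}(P)$ have the same topological closure in $\mathfrak{P}(P)$.
   Context: $\mathfrak{P}(P)$ is the power set of $P$ with the topology whose basic open sets are $O(F,G)=\{X\subseteq P: F\subseteq X,\ G\cap X=\emptyset\}$ for finite $F,G\subseteq P$. $\mathcal{J}(P)$ is the set of ideals of $P$: nonempty initial segments (closed downward) which are up-directed. $\downarrow x=\{y\in P:y\leq x\}$. *)

From HB Require Import structures.
From mathcomp Require Import all_boot all_order.
From mathcomp Require Import boolp classical_sets cardinality.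
Set Implicit Arguments. Unset Strict Implicit. Unset Printing Implicit Defensive.
Import Order.TTheory.
Local Open Scope classical_set_scope.
Local Open Scope order_scope.

Section Defs.
Context {d : Order.disp_t} {P : porderType d}.

Definition downset (x : P) : set P := [set y | y <= x].

Definition downsP : set (set P) := [set D | exists x : P, D = downset x].

Definition is_ideal (I : set P) : Prop :=
  I !=set0 /\
  (forall x y : P, I x -> y <= x -> I y) /\
  (forall x y : P, I x -> I y -> exists z : P, I z /\ x <= z /\ y <= z).

Definition idealsP : set (set P) := [set I | is_ideal I].

Definition basic_open (F G : set P) : set (set P) :=
  [set X | F `<=` X /\ G `&` X = set0].

Definition pset_open (U : set (set P)) : Prop :=
  forall X, U X -> exists F G : set P,
    finite_set F /\ finite_set G /\ basic_open F G X /\ basic_open F G `<=` U.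

Definition pset_closure (A : set (set P)) : set (set P) :=
  [set X | forall U, pset_open U -> U X -> U `&` A !=set0].

End Defs.

(* An ideal I is the directed union of the principal down-sets below its
   elements. A basic neighbourhood O(F,G) of I only constrains the finitely
   many points of F, which have an upper bound z in I by directedness, and of
   G, which avoids I and hence the smaller set |z. So |z lies in O(F,G). *)
From HB Require Import structures.
From mathcomp Require Import all_boot all_order.
From mathcomp Require Import boolp classical_sets cardinality.
Local Open Scope classical_set_scope.
Import Order.TTheory.

Section Closure.
Context {d : Order.disp_t} {P : porderType d}.

Lemma sub_pset_closure (A : set (set P)) : A `<=` pset_closure A.
Proof. by move=> X AX U _ UX; exists X. Qed.

Lemma pset_closure_sub (A B : set (set P)) :
  A `<=` pset_closure B -> pset_closure A `<=` pset_closure B.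
Proof.
move=> AB X clAX U Uopen UX.
have [Y [UY AY]] := clAX U Uopen UX.
exact: AB Y AY U Uopen UY.
Qed.

End Closure.

Section Ideals.
Context {d : Order.disp_t} {P : porderType d}.

Lemma downset_is_ideal (x : P) : is_ideal (downset x).
Proof.
split; first by exists x; rewrite /downset /=.
split; first by move=> a b /= ax ba; exact: le_trans ba ax.
by move=> a b ax bx; exists x; rewrite /downset /=.
Qed.

Lemma downsP_sub_idealsP : @downsP d P `<=` idealsP.
Proof. by move=> _ [x ->]; exact: downset_is_ideal. Qed.

Lemma ideal_neq0 (I : set P) : is_ideal I -> I != set0.
Proof. by move=> [/set0P]. Qed.

Variable I : set P.
Hypothesis idealI : is_ideal I.

Lemma downset_sub_ideal (z : P) : I z -> downset z `<=` I.
Proof. by case: idealI => _ [downI _] Iz y; exact: downI. Qed.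

Lemma ideal_seq_ub (s : seq P) :
  (forall x, x \in s -> I x) -> exists2 z, I z & forall x, x \in s -> (x <= z)%O.
Proof.
case: idealI => [[a Ia] [_ dirI]]; elim: s => [|y s IHs] sI.
  by exists a => // x; rewrite in_nil.
have [z Iz zs] := IHs (fun x xs => sI x (@mem_behead _ (y :: s) x xs)).
have [w [Iw [yw zw]]] := dirI y z (sI y (mem_head y s)) Iz.
exists w => // x; rewrite inE => /predU1P [-> //|xs].
exact: le_trans (zs x xs) zw.
Qed.

Lemma ideal_finite_ub (F : set P) :
  finite_set F -> F `<=` I -> exists2 z, I z & F `<=` downset z.
Proof.
move=> /finite_seqP [s ->] FI.
have [z Iz sz] := ideal_seq_ub s FI.
by exists z.
Qed.

Lemma ideal_in_closure_downsP : pset_closure downsP I.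
Proof.
move=> U Uopen UI.
have [F [G [finF [_ [[FI GI] OU]]]]] := Uopen I UI.
have [z Iz Fz] := ideal_finite_ub F finF FI.
exists (downset z); split; last by exists z.
apply: OU; split => //.
by rewrite -subset0 -GI; apply: setIS; exact: downset_sub_ideal.
Qed.

End Ideals.

Lemma idealsP_sub_closure_downsP {d : Order.disp_t} {P : porderType d} :
  @idealsP d P `<=` pset_closure downsP.
Proof. by move=> I; exact: ideal_in_closure_downsP. Qed.

Theorem lemma3p2 (d : Order.disp_t) (P : porderType d) :
  (@downsP d P `<=` idealsP) /\
  (@idealsP d P `<=` pset_closure downsP `\` [set set0]) /\
  pset_closure (@downsP d P) = pset_closure idealsP.
Proof.
split; first exact: downsP_sub_idealsP.
split.
  move=> I idealI; split; first exact: idealsP_sub_closure_downsP.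
  exact/eqP/ideal_neq0.
apply/seteqP; split; apply: pset_closure_sub; last exact: idealsP_sub_closure_downsP.
by move=> X /downsP_sub_idealsP; exact: sub_pset_closure.
Qed.
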